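(* Let $k\ge2$ be the cache size, let $1\le r\le k-1$ and $N=k+r$. For the cycle access graph $C_N$ on $N$ vertices, \[\mathcal{I}^{C_N}[\mathrm{FWF},\mathrm{LRU}]=\left[0,\ 1-\frac1k\right].\]
   Context: Paging: a cache holds at most $k$ pages and is initially empty. A request to a page in the cache is a hit; otherwise it is a fault, the page is brought into the cache, evicting a page first if the cache is full. $\mathcal{A}(I)$ is the number of faults of $\mathcal{A}$ on request sequence $I$. LRU evicts the least recently requested cached page; FWF, on a fault with a full cache, empties the cache and then brings in the requested page. Access graph: a graph $G$ whose vertices are the pages; a request sequence respects $G$ if any two consecutive requests are identical or adjacent in $G$; $L(G)$ is the set of such sequences. $C_N$ is the cycle on $N$ vertices. Relative interval: $\mathrm{Min}_{\mathcal{A},\mathcal{B}}(n,G)=\min\{\mathcal{A}(I)-\mathcal{B}(I): I\in L(G),|I|=n\}$, $\mathrm{Max}_{\mathcal{A},\mathcal{B}}(n,G)$ analogously with max; $\mathrm{Min}^G(\mathcal{A},\mathcal{B})=\liminf_{n\to\infty}\mathrm{Min}_{\mathcal{A},\mathcal{B}}(n,G)/n$, $\mathrm{Max}^G(\mathcal{A},\mathcal{B})=\limsup_{n\to\infty}\mathrm{Max}_{\mathcal{A},\mathcal{B}}(n,G)/n$, and $\mathcal{I}^G[\mathcal{A},\mathcal{B}]=[\mathrm{Min}^G(\mathcal{A},\mathcal{B}),\mathrm{Max}^G(\mathcal{A},\mathcal{B})]$. *)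

From mathcomp Require Import all_boot all_order all_algebra.
From mathcomp Require Import all_classical all_reals all_analysis.
Set Implicit Arguments. Unset Strict Implicit. Unset Printing Implicit Defensive.
Import Order.TTheory GRing.Theory Num.Theory.
Local Open Scope classical_set_scope.
Local Open Scope ring_scope.

Section Paging.
Variable T : eqType.

(* A paging algorithm, for cache size k, maps a request sequence to its
   number of faults.  Caches start empty. *)

(* LRU: the cache is kept as a list ordered by recency (most recent first);
   on a fault with a full cache the last (least recently requested) page is
   evicted. *)
Fixpoint lru_run (k : nat) (c : seq T) (s : seq T) : nat :=
  match s with
  | [::] => 0
  | p :: s' =>
      if p \in c then lru_run k (p :: rem p c) s'
      else (lru_run k (p :: (if (size c < k)%N then c else take k.-1 c)) s').+1
  end.

Definition LRU (k : nat) (s : seq T) : nat := lru_run k [::] s.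

Fixpoint fwf_run (k : nat) (c : seq T) (s : seq T) : nat :=
  match s with
  | [::] => 0
  | p :: s' =>
      if p \in c then fwf_run k c s'
      else (fwf_run k (if (size c < k)%N then p :: c else [:: p]) s').+1
  end.

Definition FWF (k : nat) (s : seq T) : nat := fwf_run k [::] s.
End Paging.

Definition respects (T : eqType) (G : rel T) (s : seq T) : bool :=
  sorted (fun a b => (a == b) || G a b) s.

Section RelInterval.
Variables (R : realType) (T : finType) (G : rel T) (A B : seq T -> nat).

Definition MinAB (n : nat) : \bar R :=
  ereal_inf [set (((A t)%:R - (B t)%:R : R))%:E
            | t in [set t : n.-tuple T | respects G t]].

Definition MaxAB (n : nat) : \bar R :=
  ereal_sup [set (((A t)%:R - (B t)%:R : R))%:E
            | t in [set t : n.-tuple T | respects G t]].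

Definition MinG : \bar R :=
  limn_einf (fun n => (MinAB n * ((n%:R : R)^-1)%:E)%E).
Definition MaxG : \bar R :=
  limn_esup (fun n => (MaxAB n * ((n%:R : R)^-1)%:E)%E).
End RelInterval.

Definition cycle_adj (N : nat) : rel 'I_N :=
  fun i j => ((val j == (val i).+1 %% N) || (val i == (val j).+1 %% N))%N.

From mathcomp Require Import all_boot all_order all_algebra.
From mathcomp Require Import all_classical all_reals all_analysis.
From mathcomp Require Import zify lra.
Set Implicit Arguments. Unset Strict Implicit. Unset Printing Implicit Defensive.
Import Order.TTheory GRing.Theory Num.Theory.
Import numFieldNormedType.Exports.

(* While the FWF cache holds p pages, they are the p most recently requested
   distinct pages, whereas LRU holds the k most recent ones.  Hence every FWF
   hit is an LRU hit and LRU <= FWF, with equality on constant sequences.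
   A flush is caused by a page outside the last k distinct pages, so it is an
   LRU fault too.  Hence a phase (k FWF faults on distinct pages, so at least
   k requests) contains an LRU fault, and FWF - LRU <= (1 - 1/k) n.
   Conversely, sweep back and forth along the path 0, 1, ..., k of C_N
   (possible as N > k): each round of 2k requests costs FWF 2k faults (a flush
   at each end) but LRU only 2, so FWF - LRU reaches (1 - 1/k) n up to an
   additive constant. *)

Lemma perm_take_cons_rem (T : eqType) (p : T) n l :
  p \in take n l -> perm_eq (take n (p :: rem p l)) (take n l).
Proof.
elim: l n => [|x l IHl] [|n] //=; rewrite inE.
case: (eqVneq x p) => [->|xp] /= p_in; first exact: perm_refl.
case: n p_in => [|n] p_in; first by rewrite take0 in p_in.
apply: (@perm_trans _ (x :: p :: take n (rem p l))).
  by rewrite (perm_catCA [:: p] [:: x]).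
by rewrite perm_cons; exact: IHl n.+1 p_in.
Qed.

Lemma take_rem_notin (T : eqType) (p : T) n l :
  p \notin take n l -> take n (rem p l) = take n l.
Proof.
elim: l n => [|x l IHl] [|n] //=; first by rewrite take0.
by rewrite inE negb_or eq_sym => /andP[/negbTE -> p_l] /=; rewrite IHl.
Qed.

Lemma rem_cat_notin (T : eqType) (x : T) s t :
  x \notin s -> rem x (s ++ x :: t) = s ++ t.
Proof.
elim: s => [|y s IHs] /=; first by rewrite eqxx.
by rewrite inE negb_or eq_sym => /andP[/negbTE -> x_s]; rewrite IHs.
Qed.

Section FaultCounting.
Variables (T : eqType) (k : nat).
Hypothesis k_gt0 : (0 < k)%N.
Implicit Types (c l s : seq T) (p : T).

Definition lru_step l p :=
  if p \in l then p :: rem p l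
  else p :: (if (size l < k)%N then l else take k.-1 l).

Definition fwf_step c p :=
  if p \in c then c else if (size c < k)%N then p :: c else [:: p].

Lemma lru_run_cons l p s :
  lru_run k l (p :: s) = (p \notin l) + lru_run k (lru_step l p) s.
Proof. by rewrite /= /lru_step; case: (p \in l). Qed.

Lemma fwf_run_cons c p s :
  fwf_run k c (p :: s) = (p \notin c) + fwf_run k (fwf_step c p) s.
Proof. by rewrite /= /fwf_step; case: (p \in c). Qed.

Definition fwf_lru_prefix c l :=
  [&& (size c <= k)%N, (size l <= k)%N & perm_eq (take (size c) l) c].

Lemma fwf_lru_prefix_hit c l p :
  fwf_lru_prefix c l -> p \in c -> p \in take (size c) l.
Proof. by case/and3P=> _ _ /perm_mem ->. Qed.

Lemma fwf_lru_prefix_flush c l p :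
  fwf_lru_prefix c l -> size c = k -> p \notin c -> p \notin l.
Proof. by case/and3P=> _ size_l /perm_mem <- ->; rewrite take_oversize. Qed.

Lemma size_lru_step l p : (size l <= k)%N -> (size (lru_step l p) <= k)%N.
Proof.
rewrite /lru_step; case: ifP => [p_l|_] size_l /=.
  by rewrite size_rem // prednK // -has_predT; apply/hasP; exists p.
by case: ifP => // _; rewrite size_take; case: ifP; lia.
Qed.

Lemma fwf_lru_prefix_step c l p :
  fwf_lru_prefix c l -> fwf_lru_prefix (fwf_step c p) (lru_step l p).
Proof.
move=> inv; have /and3P[size_c size_l perm_cl] := inv.
have size_l' := size_lru_step p size_l.
rewrite /fwf_step; case: ifP => [p_c|p_c].
  have p_tl := fwf_lru_prefix_hit inv p_c.
  rewrite /fwf_lru_prefix size_c size_l' /lru_step (mem_take p_tl) /=.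
  exact: perm_trans (perm_take_cons_rem p_tl) perm_cl.
have p_tl : p \notin take (size c) l by rewrite (perm_mem perm_cl) p_c.
rewrite /fwf_lru_prefix size_l' /lru_step; case: ifP => [c_lt|_] /=.
  rewrite c_lt; case: ifP => _ /=; rewrite perm_cons; first by rewrite take_rem_notin.
  by case: ifP => // _; rewrite take_takel //; lia.
by rewrite k_gt0; case: ifP => _ /=; rewrite take0.
Qed.

Lemma lru_run_le_fwf_run s c l :
  fwf_lru_prefix c l -> (lru_run k l s <= fwf_run k c s)%N.
Proof.
elim: s c l => [//|p s IHs] c l inv.
rewrite lru_run_cons fwf_run_cons.
have := IHs _ _ (fwf_lru_prefix_step p inv).
case p_c : (p \in c) => /=; first by rewrite (mem_take (fwf_lru_prefix_hit inv p_c)).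
by case: (p \in l) => /=; lia.
Qed.

Lemma fwf_run_potential s c l :
  fwf_lru_prefix c l ->
  (k * fwf_run k c s + size c <= k * lru_run k l s + (k - 1) * size s + k)%N.
Proof.
elim: s c l => [|p s IHs] c l inv; first by case/and3P: inv => /= *; lia.
rewrite lru_run_cons fwf_run_cons.
have := IHs _ _ (fwf_lru_prefix_step p inv).
have /and3P[size_c _ _] := inv.
case p_c : (p \in c) => /=.
  by rewrite (mem_take (fwf_lru_prefix_hit inv p_c)) /fwf_step p_c /=; nia.
rewrite /fwf_step p_c; case: ifP => c_lt /=; first by case: (p \in l) => /=; nia.
have c_full : size c = k by lia.
by rewrite (negbTE (fwf_lru_prefix_flush inv c_full (negbT p_c))) /=; nia.
Qed.

Lemma LRU_le_FWF s : (LRU k s <= FWF k s)%N.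
Proof. by apply: lru_run_le_fwf_run. Qed.

Lemma FWF_le_LRU s : (k * FWF k s <= k * LRU k s + (k - 1) * size s)%N.
Proof.
case: s => [|p s]; first by rewrite /FWF /LRU /=; lia.
have inv : fwf_lru_prefix [:: p] [:: p] by rewrite /fwf_lru_prefix /= k_gt0 perm_refl.
rewrite /FWF /LRU lru_run_cons fwf_run_cons /lru_step /fwf_step /= k_gt0.
by have := fwf_run_potential s inv; rewrite /=; nia.
Qed.

End FaultCounting.

Lemma respects_nseq (T : eqType) (G : rel T) n (x : T) : respects G (nseq n x).
Proof. by case: n => //= n; elim: n => //= n ->; rewrite eqxx. Qed.

Lemma FWF_nseq (T : eqType) k n (x : T) : (0 < k)%N ->
  FWF k (nseq n x) = LRU k (nseq n x).
Proof.
move=> k_gt0; case: n => // n; rewrite /FWF /LRU /= k_gt0.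
by elim: n => //= n IHn; rewrite mem_seq1 !eqxx.
Qed.

Section Zigzag.
Variables (T : eqType) (k : nat).
Hypothesis k_gt0 : (0 < k)%N.
Implicit Types (c l s A : seq T) (x y : T).

Lemma fwf_run_fresh A c s : uniq (A ++ c) -> (size A + size c <= k)%N ->
  fwf_run k c (A ++ s) = size A + fwf_run k (rev A ++ c) s.
Proof.
elim: A c => [//|x A IHA] c /= /andP[]; rewrite mem_cat negb_or => /andP[x_A x_c].
move=> uniq_Ac size_Ac; rewrite (negbTE x_c) ifT; last by lia.
rewrite IHA ?rev_cons ?cat_rcons //=; last by lia.
by rewrite -cat1s uniq_catCA /= mem_cat negb_or x_A x_c.
Qed.

Lemma lru_run_fresh A l s : uniq (A ++ l) -> (size A + size l <= k)%N ->
  lru_run k l (A ++ s) = size A + lru_run k (rev A ++ l) s.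
Proof.
elim: A l => [//|x A IHA] l /= /andP[]; rewrite mem_cat negb_or => /andP[x_A x_l].
move=> uniq_Al size_Al; rewrite (negbTE x_l) ifT; last by lia.
rewrite IHA ?rev_cons ?cat_rcons //=; last by lia.
by rewrite -cat1s uniq_catCA /= mem_cat negb_or x_A x_l.
Qed.

Lemma lru_run_cached l1 A l2 s : uniq (l1 ++ A ++ l2) ->
  lru_run k (l1 ++ A ++ l2) (A ++ s) = lru_run k (rev A ++ l1 ++ l2) s.
Proof.
elim: A l1 => [//|x A IHA] l1 uniq_l /=.
have x_l1 : x \notin l1 by move: uniq_l; rewrite cat_uniq /= => /and3P[_ /norP[]].
have x_l : x \in l1 ++ x :: A ++ l2 by rewrite mem_cat mem_head orbT.
rewrite x_l rem_cat_notin // rev_cons cat_rcons.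
apply: (IHA (x :: l1)).
by rewrite -cat1s -catA uniq_catCA.
Qed.

Section HalfSweep.
Variables (x y : T) (A : seq T).
Hypotheses (uniq_xyA : uniq (x :: y :: A)) (size_A : size A = k.-1).

Let uniq_xA : uniq (x :: A).
Proof. by move: uniq_xyA => /= /and3P[]; rewrite inE => /norP[_ ->] _ ->. Qed.

Let y_notin : y \notin rev A ++ [:: x].
Proof.
rewrite mem_cat mem_rev inE negb_or eq_sym.
by move: uniq_xyA => /= /and3P[]; rewrite inE => /norP[-> _] ->.
Qed.

Lemma fwf_half_sweep s :
  fwf_run k [:: x] (A ++ y :: s) = k + fwf_run k [:: y] s.
Proof.
rewrite fwf_run_fresh /=; [|by rewrite cats1 rcons_uniq|by rewrite size_A; lia].
rewrite (negbTE y_notin) size_cat size_rev size_A /= ifF; last by lia.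
by rewrite addnS -addSn prednK.
Qed.

Lemma lru_half_sweep s :
  lru_run k (x :: A) (A ++ y :: s) = 1 + lru_run k (y :: rev A) s.
Proof.
have := @lru_run_cached [:: x] A [::] (y :: s); rewrite !cats0 /= => -> //.
rewrite (negbTE y_notin) size_cat size_rev size_A /= ifF; last by lia.
by rewrite take_size_cat // size_rev size_A.
Qed.

End HalfSweep.

Lemma uniq_sweep_back x y A : uniq (x :: y :: A) -> uniq (y :: x :: rev A).
Proof.
rewrite /= !inE !mem_rev rev_uniq => /andP[/norP[x_y x_A] /andP[y_A ->]].
by rewrite eq_sym (negbTE x_y) (negbTE y_A) x_A.
Qed.

Definition zigzag_head x y A := y :: rev A ++ [:: x].
Definition zigzag_round x y A := A ++ y :: rev A ++ [:: x].
Definition zigzag x y A n :=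
  take n (zigzag_head x y A ++ flatten (nseq n (zigzag_round x y A))).

Section ZigzagFaults.
Variables (x y : T) (A : seq T).
Hypothesis size_A : size A = k.-1.

Lemma size_zigzag_round : size (zigzag_round x y A) = 2 * k.
Proof. by rewrite /zigzag_round size_cat /= size_cat size_rev size_A /=; lia. Qed.

Lemma size_zigzag_head : size (zigzag_head x y A) = k.+1.
Proof. by rewrite /zigzag_head /= size_cat size_rev size_A /=; lia. Qed.

Lemma size_zigzag n : size (zigzag x y A n) = n.
Proof.
have size_rounds M : size (flatten (nseq M (zigzag_round x y A))) = M * (2 * k).
  by elim: M => //= M IHM; rewrite size_cat IHM size_zigzag_round; lia.
by rewrite /zigzag size_take size_cat size_rounds; case: ifP => //; nia.
Qed.

Hypothesis uniq_xyA : uniq (x :: y :: A).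
Let uniq_yxA : uniq (y :: x :: rev A) := uniq_sweep_back uniq_xyA.
Let size_rev_A : size (rev A) = k.-1. Proof. by rewrite size_rev. Qed.

Lemma zigzag_round_cat s :
  zigzag_round x y A ++ s = A ++ y :: (rev A ++ x :: s).
Proof. by rewrite /zigzag_round -catA /= -catA. Qed.

Lemma fwf_zigzag_round s :
  fwf_run k [:: x] (zigzag_round x y A ++ s) = 2 * k + fwf_run k [:: x] s.
Proof.
by rewrite zigzag_round_cat fwf_half_sweep // fwf_half_sweep //; lia.
Qed.

Lemma lru_zigzag_round s :
  lru_run k (x :: A) (zigzag_round x y A ++ s) = 2 + lru_run k (x :: A) s.
Proof.
by rewrite zigzag_round_cat lru_half_sweep // lru_half_sweep // revK.
Qed.

Lemma fwf_zigzag_head s :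
  fwf_run k [::] (zigzag_head x y A ++ s) = k.+1 + fwf_run k [:: x] s.
Proof. by rewrite /zigzag_head /= -catA /= k_gt0 fwf_half_sweep. Qed.

Lemma lru_zigzag_head s :
  lru_run k [::] (zigzag_head x y A ++ s) = k.+1 + lru_run k (x :: A) s.
Proof.
rewrite /zigzag_head /= -catA /= k_gt0 lru_run_fresh; first last.
- by rewrite /= size_rev_A; lia.
- by rewrite cats1 rcons_uniq mem_rev rev_uniq; case/andP: uniq_xyA => _.
have x_Ay : x \notin A ++ [:: y].
  rewrite mem_cat inE negb_or.
  by case/andP: uniq_xyA; rewrite inE negb_or => /andP[-> ->].
rewrite revK /= (negbTE x_Ay) size_cat /= size_A ifF; last by lia.
by rewrite take_size_cat ?size_rev // size_A; lia.
Qed.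

Lemma fwf_lru_prefix_zigzag : fwf_lru_prefix k [:: x] (x :: A).
Proof. by rewrite /fwf_lru_prefix /= size_A take0 perm_refl k_gt0 andbT; lia. Qed.

Lemma zigzag_rounds_fault_gap M j : (j <= 2 * k * M)%N ->
  let s := take j (flatten (nseq M (zigzag_round x y A))) in
  (k * lru_run k (x :: A) s + (k - 1) * j
    <= k * fwf_run k [:: x] s + 2 * k * (k - 1))%N.
Proof.
elim: M j => [|M IHM] j j_le /=.
  have -> : j = 0 by lia.
  lia.
rewrite take_cat size_zigzag_round; case: ifP => j_lt.
  have := lru_run_le_fwf_run k_gt0 (take j (zigzag_round x y A)) fwf_lru_prefix_zigzag.
  by nia.
rewrite fwf_zigzag_round lru_zigzag_round.
by have := IHM (j - 2 * k) ltac:(lia); nia.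
Qed.

(* The constant is 2k(k - 1) for an incomplete round plus (k - 1)(k + 1) for
   the head. *)
Lemma zigzag_fault_gap n :
  (k * LRU k (zigzag x y A n) + (k - 1) * n
    <= k * FWF k (zigzag x y A n) + (k - 1) * (3 * k).+1)%N.
Proof.
rewrite /zigzag take_cat size_zigzag_head; case: ifP => n_lt.
  by have := LRU_le_FWF k_gt0 (take n (zigzag_head x y A)); nia.
rewrite /FWF /LRU fwf_zigzag_head lru_zigzag_head.
by have := @zigzag_rounds_fault_gap n (n - k.+1) ltac:(nia); nia.
Qed.

End ZigzagFaults.
End Zigzag.

Lemma zigzag_map (T U : eqType) (f : T -> U) x y A n :
  zigzag (f x) (f y) (map f A) n = map f (zigzag x y A n).
Proof.
rewrite /zigzag map_take map_cat map_flatten map_nseq /zigzag_head /zigzag_round.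
by rewrite /= !map_cat /= map_cat map_rev.
Qed.

Lemma mem_zigzag (T : eqType) (x y : T) A n :
  {subset zigzag x y A n <= x :: y :: A}.
Proof.
move=> z /mem_take; rewrite mem_cat => /orP[|/flattenP[s]]; last first.
  by rewrite mem_nseq => /andP[_ /eqP ->]; rewrite !(inE, mem_cat, mem_rev);
    case: (z == x); case: (z == y); case: (z \in A).
by rewrite !(inE, mem_cat, mem_rev); case: (z == x); case: (z == y); case: (z \in A).
Qed.

Definition nat_adj : rel nat := fun a b => (b == a.+1) || (a == b.+1).

Lemma path_nat_adj_iota a j t :
  path nat_adj a (iota a.+1 j ++ t) = path nat_adj (a + j) t.
Proof.
elim: j a => [|j IHj] a; first by rewrite addn0.
by rewrite /= IHj addSnnS /nat_adj eqxx.
Qed.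

Lemma path_nat_adj_rev_iota j t :
  path nat_adj j.+1 (rev (iota 1 j) ++ 0 :: t) = path nat_adj 0 t.
Proof.
elim: j t => [|j IHj] t; first by rewrite /= /nat_adj.
have -> : iota 1 j.+1 = iota 1 j ++ [:: j.+1] by have := iotaD 1 j 1; rewrite addn1 add1n.
by rewrite rev_cat /= IHj /nat_adj eqxx orbT.
Qed.

(* With these pages the zigzag is 0, 1, ..., m.+1, m, ..., 1, 0, 1, ... *)
Lemma sorted_zigzag_nat m n :
  sorted nat_adj (zigzag m.+1 0 (rev (iota 1 m)) n).
Proof.
have rounds M : path nat_adj m.+1 (flatten (nseq M (zigzag_round m.+1 0 (rev (iota 1 m))))).
  rewrite /zigzag_round revK; elim: M => //= M IHM.
  rewrite -!catA /= path_nat_adj_rev_iota -catA path_nat_adj_iota /= IHM.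
  by rewrite /nat_adj eqxx add0n.
rewrite /zigzag; set s := (_ ++ _).
have : sorted nat_adj s.
  rewrite /s /zigzag_head revK /= -catA path_nat_adj_iota /= rounds.
  by rewrite /nat_adj eqxx add0n.
by rewrite -[s in sorted _ s](cat_take_drop n) => /cat_sorted2[].
Qed.

Lemma cycle_adj_insubd N (o : 'I_N) i j : (i < N)%N -> (j < N)%N ->
  nat_adj i j -> cycle_adj (insubd o i) (insubd o j).
Proof.
move=> i_lt j_lt; rewrite /cycle_adj !val_insubd i_lt j_lt.
case/orP=> /eqP ij; first by rewrite -ij (modn_small j_lt) eqxx.
by rewrite -ij (modn_small i_lt) eqxx orbT.
Qed.

Lemma cycle_zigzag k N n : (0 < k)%N -> (k < N)%N ->
  exists s : seq 'I_N, [/\ size s = n, respects (@cycle_adj N) s &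
    (k * LRU k s + (k - 1) * n <= k * FWF k s + (k - 1) * (3 * k).+1)%N].
Proof.
case: k => // m _ m_lt; have N_gt0 : (0 < N)%N by lia.
pose f := insubd (Ordinal N_gt0); pose pages := m.+1 :: 0 :: rev (iota 1 m).
have pages_lt : {in pages, forall i, i < N}%N.
  by move=> i; rewrite !inE mem_rev mem_iota => /or3P[/eqP->|/eqP->|/andP[_]]; lia.
have f_inj : {in pages &, injective f}.
  by move=> i j /pages_lt i_lt /pages_lt j_lt /(congr1 val); rewrite !val_insubd i_lt j_lt.
have uniq_pages : uniq pages.
  rewrite /= !inE mem_rev mem_iota rev_uniq iota_uniq mem_rev mem_iota andbT.
  by apply/andP; split; apply/negP; lia.
exists (zigzag (f m.+1) (f 0) (map f (rev (iota 1 m))) n); split.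
- by rewrite (@size_zigzag _ m.+1) // size_map size_rev size_iota.
- rewrite /respects zigzag_map sorted_map.
  apply: (@sub_in_sorted _ (mem pages) nat_adj); last exact: sorted_zigzag_nat.
    move=> i j /pages_lt i_lt /pages_lt j_lt ij.
    by apply/orP; right; exact: cycle_adj_insubd.
  by apply/allP => i /mem_zigzag.
- apply: zigzag_fault_gap => //; rewrite ?size_map ?size_rev ?size_iota //.
  by rewrite -[_ :: _]/(map f pages) (map_inj_in_uniq f_inj).
Qed.

Local Open Scope ring_scope.

Section ScaledGap.
Variables (R : realFieldType) (k F L n : nat).
Hypothesis k_gt0 : (0 < k)%N.

Lemma nat_gap_le_scaled : (k * F <= k * L + (k - 1) * n)%N ->
  (F%:R - L%:R : R) <= (1 - k%:R^-1) * n%:R.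
Proof.
rewrite -(ler_nat R) natrD !natrM natrB // => gap.
have k_pos : (0 : R) < k%:R by rewrite ltr0n.
rewrite -(ler_pM2l k_pos) mulrBr mulrA mulrBr mulr1 (mulfV (lt0r_neq0 k_pos)).
lra.
Qed.

Lemma nat_gap_ge_scaled C : (k * L + (k - 1) * n <= k * F + C)%N ->
  (1 - k%:R^-1) * n%:R - C%:R / k%:R <= (F%:R - L%:R : R).
Proof.
rewrite -(ler_nat R) !natrD !natrM natrB // => gap.
have k_pos : (0 : R) < k%:R by rewrite ltr0n.
rewrite -(ler_pM2l k_pos) mulrBr mulrA mulrBr mulr1 (mulfV (lt0r_neq0 k_pos)).
rewrite mulrCA (mulfV (lt0r_neq0 k_pos)) mulr1.
lra.
Qed.

End ScaledGap.

Section LimnEsup.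
Variable R : realType.
Implicit Types (u w : (\bar R)^nat).
Local Open Scope ereal_scope.
Local Open Scope classical_set_scope.

Lemma le_limn_esup u w m : (forall n, (m <= n)%N -> u n <= w n) ->
  limn_esup u <= limn_esup w.
Proof.
move=> uw; rewrite !limn_esup_lim.
apply: lee_lim; [exact: is_cvg_esups|exact: is_cvg_esups|].
exists m => // n /= mn; apply: ge_ereal_sup => _ [j /= nj <-].
by apply: le_trans (uw j (leq_trans mn nj)) _; apply: ereal_sup_ubound; exists j.
Qed.

Lemma limn_esup_squeeze u (v : R^nat) (a : R) :
  (forall n, (0 < n)%N -> u n <= a%:E) -> v @ \oo --> a ->
  (forall n, (0 < n)%N -> (v n)%:E <= u n) -> limn_esup u = a%:E.
Proof.
move=> u_le v_cvg v_le; apply/le_anti/andP; split.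
  have [_ <-] := cvg_limn_einf_sup (cvg_cst (a%:E : \bar R)).
  exact: le_limn_esup u_le.
have vE_cvg : (fun n => (v n)%:E) @ \oo --> a%:E.
  by apply: cvg_EFin; [exact: nearW | exact: v_cvg].
have [_ <-] := cvg_limn_einf_sup vE_cvg.
exact: le_limn_esup v_le.
Qed.

End LimnEsup.

Section RelativeInterval.
Variables (R : realType) (T : finType) (G : rel T) (A B : seq T -> nat).
Local Open Scope ereal_scope.
Local Open Scope classical_set_scope.

Lemma MaxAB_ge s : respects G s ->
  ((A s)%:R - (B s)%:R : R)%:E <= MaxAB R G A B (size s).
Proof. by move=> Gs; apply: ereal_sup_ubound; exists (in_tuple s). Qed.

Lemma MaxAB_le n (b : R) :
  (forall s, size s = n -> respects G s -> ((A s)%:R - (B s)%:R <= b)%R) ->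
  MaxAB R G A B n <= b%:E.
Proof.
by move=> le_b; apply: ge_ereal_sup => _ [t Gt <-]; rewrite lee_fin le_b ?size_tuple.
Qed.

Lemma MaxG_eq (a c : R) :
  (forall s, respects G s -> ((A s)%:R - (B s)%:R <= a * (size s)%:R)%R) ->
  (forall n, exists s, [/\ size s = n, respects G s &
     (a * n%:R - c <= (A s)%:R - (B s)%:R)%R]) ->
  MaxG R G A B = a%:E.
Proof.
move=> le_a wit; rewrite /MaxG.
apply: (@limn_esup_squeeze _ _ (fun n => a - c * n%:R^-1)%R) => [n n_gt0||n n_gt0].
- have n_neq0 : (n%:R != 0 :> R)%R by rewrite pnatr_eq0 -lt0n.
  have : MaxAB R G A B n <= (a * n%:R)%:E by apply: MaxAB_le => s <-; exact: le_a.
  have n_inv_ge0 : 0 <= (n%:R^-1 : R)%:E by rewrite lee_fin invr_ge0 ler0n.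
  move=> /(lee_wpmul2r n_inv_ge0)/le_trans; apply.
  by rewrite -EFinM lee_fin mulfK.
- rewrite -(@cvg_shiftS R).
  have : (fun n => a - c * harmonic n)%R @ \oo --> (a - c * 0)%R.
    by apply: cvgB; [exact: cvg_cst | apply: cvgM; [exact: cvg_cst | exact: cvg_harmonic]].
  by rewrite mulr0 subr0.
- have n_neq0 : (n%:R != 0 :> R)%R by rewrite pnatr_eq0 -lt0n.
  have [s [size_s Gs gap]] := wit n.
  have gapE : (a * n%:R - c)%:E <= MaxAB R G A B n.
    by rewrite -size_s; apply: le_trans (MaxAB_ge Gs); rewrite lee_fin size_s.
  have n_inv_ge0 : 0 <= (n%:R^-1 : R)%:E by rewrite lee_fin invr_ge0 ler0n.
  apply: le_trans (lee_wpmul2r n_inv_ge0 gapE).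
  by rewrite -EFinM lee_fin mulrBl mulfK.
Qed.

Hypothesis B_le_A : forall s, (B s <= A s)%N.

Lemma MinAB_eq0 n : (exists s, [/\ size s = n, respects G s & A s = B s]) ->
  MinAB R G A B n = 0.
Proof.
move=> [s [<- Gs ABs]]; apply/le_anti/andP; split.
  by apply: ereal_inf_lbound; exists (in_tuple s) => //; rewrite /= ABs subrr.
by apply: le_ereal_inf_tmp => _ [t _ <-]; rewrite lee_fin subr_ge0 ler_nat.
Qed.

Lemma MinG_eq0 : (forall n, exists s, [/\ size s = n, respects G s & A s = B s]) ->
  MinG R G A B = 0.
Proof.
move=> wit; rewrite /MinG; under eq_fun do rewrite MinAB_eq0 // mul0e.
by have [-> _] := cvg_limn_einf_sup (cvg_cst (0 : \bar R)).
Qed.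

End RelativeInterval.

Theorem theorem8 (R : realType) (k r : nat) :
  (2 <= k)%N -> (1 <= r)%N -> (r <= k - 1)%N ->
  let N := (k + r)%N in
  MinG R (@cycle_adj N) (@FWF _ k) (@LRU _ k) = 0%E /\
  MaxG R (@cycle_adj N) (@FWF _ k) (@LRU _ k) = (1 - (k%:R)^-1)%:E.
Proof.
move=> k_ge2 r_ge1 _ N; have k_gt0 : (0 < k)%N by lia.
split.
  apply: MinG_eq0 => [s|n]; first exact: LRU_le_FWF.
  have N_gt0 : (0 < N)%N by lia.
  exists (nseq n (Ordinal N_gt0)); split; rewrite ?size_nseq ?respects_nseq //.
  exact: FWF_nseq.
apply: (@MaxG_eq _ _ _ _ _ _ (((k - 1) * (3 * k).+1)%:R / k%:R)) => [s _|n].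
  exact: nat_gap_le_scaled k_gt0 (FWF_le_LRU k_gt0 s).
have [|s [size_s Gs gap]] := @cycle_zigzag k N n k_gt0; first by rewrite /N; lia.
exists s; split => //.
by rewrite -size_s in gap *; exact: nat_gap_ge_scaled k_gt0 _ gap.
Qed.
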